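(* Let $K\ge 1$ be an integer and $d\in[0,1]$. Let $C_{2K}(d)$ denote the capacity of the $2K$-ary i.i.d. deletion channel with deletion probability $d$ and $C_2(d)$ the capacity of the binary i.i.d. deletion channel with the same deletion probability $d$. Then $$C_{2K}(d)\le C_2(d)+(1-d)\log(K).$$
   Context: The $q$-ary i.i.d. deletion channel with deletion probability $d$: an input sequence $\mathbf X=(x_1,\dots,x_N)\in\{1,\dots,q\}^N$ is transmitted; each symbol is independently (and independently of $\mathbf X$) deleted with probability $d$ or delivered unchanged with probability $1-d$, and the output $\mathbf Y=(y_1,\dots,y_M)$ is the subsequence of surviving symbols in their original order (so $M\sim\mathrm{Binomial}(N,1-d)$); neither transmitter nor receiver knows the positions of deletions. Its capacity is $C_q(d)=\lim_{N\to\infty}\max_{P(\mathbf X)}\frac1N I(\mathbf X;\mathbf Y)$, where the maximum is over all distributions of $\mathbf X$ on $\{1,\dots,q\}^N$. All logarithms are taken to the same base (the unit of information). *)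

From Stdlib Require Import Reals Lra Lia Arith List.
Import ListNotations.
Open Scope R_scope.

(** Alphabet {1,...,q} is represented by the naturals {0,...,q-1}. *)

Fixpoint words (q N : nat) : list (list nat) :=
  match N with
  | O => [ [] ]
  | S n => flat_map (fun w => map (fun a => a :: w) (seq 0 q)) (words q n)
  end.

Definition out_words (q N : nat) : list (list nat) :=
  flat_map (words q) (seq 0 (S N)).

(** Number of ways [y] arises from [x] as a subsequence
    (number of deletion patterns mapping [x] to [y]). *)
Fixpoint emb (x y : list nat) : nat :=
  match x, y with
  | _, [] => 1%nat
  | [], _ :: _ => 0%nat
  | a :: x', b :: y' =>
      (emb x' y + (if Nat.eqb a b then emb x' y' else 0))%nat
  end.

Definition W (d : R) (x y : list nat) : R :=
  INR (emb x y) * d ^ (length x - length y) * (1 - d) ^ (length y).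

Definition sum_list (f : list nat -> R) (l : list (list nat)) : R :=
  fold_right (fun a acc => f a + acc) 0 l.

Definition is_dist (q N : nat) (P : list nat -> R) : Prop :=
  (forall x, In x (words q N) -> 0 <= P x) /\ sum_list P (words q N) = 1.

Definition PY (q N : nat) (d : R) (P : list nat -> R) (y : list nat) : R :=
  sum_list (fun x => P x * W d x y) (words q N).

(** Mutual information I(X;Y) (natural logarithm; zero-probability terms
    contribute 0). *)
Definition MI (q N : nat) (d : R) (P : list nat -> R) : R :=
  sum_list (fun x =>
    sum_list (fun y =>
      if Rlt_dec 0 (P x * W d x y)
      then P x * W d x y * ln (W d x y / PY q N d P y)
      else 0) (out_words q N)) (words q N).

Definition MI_set (q N : nat) (d : R) : R -> Prop :=
  fun r => exists P, is_dist q N P /\ r = MI q N d P.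

(** [C] is the capacity C_q(d) = lim_N (1/N) max_P I(X;Y). *)
Definition is_capacity (q : nat) (d : R) (C : R) : Prop :=
  exists M : nat -> R,
    (forall N, is_lub (MI_set q N d) (M N)) /\
    Un_cv (fun n => M (S n) / INR (S n)) C.

(** Fix a blocklength [N] and an input distribution [P] on [2K]-ary words.
    Merge letters [0..K-1] into [0] and [K..2K-1] into [1]; this map [f]
    sends [P] to a binary input distribution [P2].  Three facts drive the
    proof:
    - merging letters can only create embeddings, so [W(y|x) <= W(f y|f x)];
    - the merged output [f Y] of the [2K]-ary channel on [x] is distributed
      exactly as the output of the binary channel on [f x];
    - [Q(y) = P_{Y2}(f y) / K^|y|] is a probability distribution on outputs.
    Splitting [ln (W(y|x) / P_Y(y))] accordingly and using Gibbs'
    inequality [ln t <= t - 1] gives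
    [I(X;Y) <= I(f X; Y2) + E|Y| ln K = I(f X; Y2) + N (1-d) ln K].
    Dividing by [N] and letting [N] grow yields the theorem. *)

From Stdlib Require Import Reals Lra Lia List.
Import ListNotations.
Open Scope R_scope.

(** Finite sums over lists.  [sum_list] of the definitions is the instance
    of [sumR] at words; [sumR] is needed at other index types as well. *)
Definition sumR {A : Type} (f : A -> R) (l : list A) : R :=
  fold_right (fun a acc => f a + acc) 0 l.
Arguments sumR : simpl never.

Lemma sumR_nil {A : Type} (f : A -> R) : sumR f [] = 0.
Proof. reflexivity. Qed.

Lemma sumR_cons {A : Type} (f : A -> R) a l : sumR f (a :: l) = f a + sumR f l.
Proof. reflexivity. Qed.

Lemma sumR_app {A : Type} (f : A -> R) l1 l2 : sumR f (l1 ++ l2) = sumR f l1 + sumR f l2.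
Proof. induction l1 as [|a l1 IH]; simpl; rewrite ?sumR_cons, ?IH, ?sumR_nil; cbv beta; lra. Qed.

Lemma sumR_map {A B : Type} (f : B -> R) (g : A -> B) l :
  sumR f (map g l) = sumR (fun a => f (g a)) l.
Proof. induction l as [|a l IH]; simpl; rewrite ?sumR_cons, ?IH, ?sumR_nil; cbv beta; lra. Qed.

Lemma sumR_flat_map {A B : Type} (f : B -> R) (g : A -> list B) l :
  sumR f (flat_map g l) = sumR (fun a => sumR f (g a)) l.
Proof. induction l as [|a l IH]; simpl; rewrite ?sumR_app, ?sumR_cons, ?IH, ?sumR_nil; cbv beta; lra. Qed.

Lemma sumR_ext_in {A : Type} (f g : A -> R) l :
  (forall a, In a l -> f a = g a) -> sumR f l = sumR g l.
Proof.
  induction l as [|a l IH]; intro H; [reflexivity|].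
  rewrite !sumR_cons, H, IH; [reflexivity| |left; reflexivity].
  intros b Hb. apply H. right. exact Hb.
Qed.

Lemma sumR_le_in {A : Type} (f g : A -> R) l :
  (forall a, In a l -> f a <= g a) -> sumR f l <= sumR g l.
Proof.
  induction l as [|a l IH]; intro H; rewrite ?sumR_cons, ?sumR_nil; [lra|].
  pose proof (H a (or_introl eq_refl)). pose proof (IH (fun b Hb => H b (or_intror Hb))). lra.
Qed.

Lemma sumR_plus {A : Type} (f g : A -> R) l :
  sumR (fun a => f a + g a) l = sumR f l + sumR g l.
Proof. induction l as [|a l IH]; simpl; rewrite ?sumR_cons, ?IH, ?sumR_nil; cbv beta; lra. Qed.

Lemma sumR_scal {A : Type} c (f : A -> R) l : sumR (fun a => c * f a) l = c * sumR f l.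
Proof. induction l as [|a l IH]; simpl; rewrite ?sumR_cons, ?IH, ?sumR_nil; cbv beta; lra. Qed.

Lemma sumR_const {A : Type} c (l : list A) : sumR (fun _ => c) l = INR (length l) * c.
Proof.
  induction l as [|a l IH]; rewrite ?sumR_cons, ?sumR_nil; simpl length;
    rewrite ?S_INR, ?IH; simpl; lra.
Qed.

Lemma sumR_zero {A : Type} (l : list A) : sumR (fun _ => 0) l = 0.
Proof. rewrite sumR_const. lra. Qed.

Lemma sumR_swap {A B : Type} (F : A -> B -> R) l1 l2 :
  sumR (fun a => sumR (fun b => F a b) l2) l1 = sumR (fun b => sumR (fun a => F a b) l1) l2.
Proof.
  induction l1 as [|a l1 IH]; [symmetry; apply sumR_zero|].
  rewrite sumR_cons, IH, <- sumR_plus. reflexivity.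
Qed.

Lemma sumR_nonneg {A : Type} (f : A -> R) l : (forall a, In a l -> 0 <= f a) -> 0 <= sumR f l.
Proof.
  intro H. transitivity (sumR (fun _ => 0) l); [right; symmetry; apply sumR_zero|].
  apply sumR_le_in. exact H.
Qed.

Lemma sumR_term {A : Type} (f : A -> R) l a :
  (forall b, In b l -> 0 <= f b) -> In a l -> f a <= sumR f l.
Proof.
  induction l as [|b l IH]; simpl; intros H Ha; [contradiction|]. rewrite sumR_cons.
  pose proof (sumR_nonneg f l (fun c Hc => H c (or_intror Hc))).
  destruct Ha as [<-|Ha]; [lra|].
  pose proof (H b (or_introl eq_refl)). pose proof (IH (fun c Hc => H c (or_intror Hc)) Ha). lra.
Qed.

Lemma sumR_delta {A : Type} (eq_dec : forall a b : A, {a = b} + {a <> b}) (g : A -> R) l a :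
  NoDup l -> In a l -> sumR (fun b => if eq_dec a b then g b else 0) l = g a.
Proof.
  induction l as [|b l IH]; simpl; intros Hnd Ha; [contradiction|].
  apply NoDup_cons_iff in Hnd as [Hb Hnd]. rewrite sumR_cons.
  destruct (eq_dec a b) as [<-|Hne].
  - rewrite (sumR_ext_in _ (fun _ => 0)), sumR_zero; [lra|].
    intros c Hc. destruct (eq_dec a c) as [<-|]; [contradiction|reflexivity].
  - destruct Ha as [->|Ha]; [congruence|]. rewrite IH; auto. lra.
Qed.

Lemma In_words q n w : In w (words q n) <-> length w = n /\ Forall (fun a => (a < q)%nat) w.
Proof.
  revert w; induction n as [|n IH]; intro w; simpl.
  - split; [intros [<-|[]]; auto|]. intros [H _]. destruct w; [auto|discriminate].
  - rewrite in_flat_map. split.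
    + intros [w' [Hw' Hin]]. apply in_map_iff in Hin as [a [<- Ha]].
      apply in_seq in Ha. apply IH in Hw' as [Hl HF]. simpl; split; [lia|constructor; auto; lia].
    + intros [Hl HF]. destruct w as [|a w']; [discriminate|]. inversion HF; subst.
      exists w'. split; [apply IH; auto|]. apply in_map_iff. exists a. split; auto. apply in_seq; lia.
Qed.

Lemma sum_words_S q n (F : list nat -> R) :
  sumR F (words q (S n)) = sumR (fun w => sumR (fun a => F (a :: w)) (seq 0 q)) (words q n).
Proof. simpl. rewrite sumR_flat_map. apply sumR_ext_in. intros. apply sumR_map. Qed.

Lemma sum_letters_delta (g : nat -> R) q a : (a < q)%nat ->
  sumR (fun b => if Nat.eq_dec a b then g b else 0) (seq 0 q) = g a.
Proof. intro Ha. apply sumR_delta; [apply seq_NoDup|apply in_seq; lia]. Qed.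

Definition word_eq_dec : forall u v : list nat, {u = v} + {u <> v} :=
  list_eq_dec Nat.eq_dec.

Lemma sum_words_delta q n (G : list nat -> R) c : In c (words q n) ->
  sumR (fun b => if word_eq_dec c b then G b else 0) (words q n) = G c.
Proof.
  revert G c; induction n as [|n IH]; intros G c Hc.
  - destruct Hc as [<-|[]]. simpl. rewrite sumR_cons, sumR_nil. destruct (word_eq_dec [] []); [lra|congruence].
  - rewrite sum_words_S. apply In_words in Hc as [Hl HF].
    destruct c as [|a c]; [discriminate|]. inversion HF; subst. injection Hl as Hl.
    rewrite <- (IH (fun w => G (a :: w)) c) by (apply In_words; auto).
    apply sumR_ext_in. intros w _. destruct (word_eq_dec c w) as [<-|Hne].
    + rewrite <- (sum_letters_delta (fun b => G (b :: c)) q a) by assumption.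
      apply sumR_ext_in. intros b _.
      destruct (Nat.eq_dec a b), (word_eq_dec (a :: c) (b :: c)); congruence.
    + transitivity (sumR (fun _ => 0) (seq 0 q)); [|apply sumR_zero].
      apply sumR_ext_in. intros b _.
      destruct (word_eq_dec (a :: c) (b :: w)); congruence.
Qed.

Lemma emb_nil_r x : emb x [] = 1%nat.
Proof. destruct x; reflexivity. Qed.

Lemma emb_long x y : (length x < length y)%nat -> emb x y = 0%nat.
Proof.
  revert y; induction x as [|a x IH]; intros y H.
  - destruct y; simpl in *; [lia|reflexivity].
  - destruct y as [|b y]; simpl in *; [lia|].
    rewrite IH by (simpl; lia). destruct (Nat.eqb a b); [rewrite IH by lia|]; reflexivity.
Qed.

Lemma emb_le_map (f : nat -> nat) x y : (emb x y <= emb (map f x) (map f y))%nat.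
Proof.
  revert y; induction x as [|a x IH]; intros y.
  - destruct y; simpl; lia.
  - destruct y as [|b y]; simpl; [lia|].
    pose proof (IH (b :: y)) as H1. simpl in H1. pose proof (IH y) as H2.
    destruct (Nat.eqb_spec a b); [subst; rewrite Nat.eqb_refl; lia|].
    destruct (Nat.eqb (f a) (f b)); lia.
Qed.

(** First-letter recursion for embedding-weighted sums over the outputs of a
    given length: an embedding of [y] into [a :: x] either skips [a] or maps
    the first letter of [y] (which must be [a]) onto it. *)
Lemma emb_sum_cons q a x m (F : list nat -> R) : (a < q)%nat ->
  sumR (fun y => INR (emb (a :: x) y) * F y) (words q (S m)) =
  sumR (fun y => INR (emb x y) * F y) (words q (S m)) +
  sumR (fun w => INR (emb x w) * F (a :: w)) (words q m).
Proof.
  intro Ha. rewrite !sum_words_S, <- sumR_plus. apply sumR_ext_in. intros w _.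
  rewrite <- (sum_letters_delta (fun b => INR (emb x w) * F (b :: w)) q a Ha), <- sumR_plus.
  apply sumR_ext_in. intros b _. cbn [emb]. rewrite plus_INR.
  destruct (Nat.eqb_spec a b), (Nat.eq_dec a b); simpl; try lra; congruence.
Qed.

Section LetterMerging.
Variables (q r : nat) (f : nat -> nat).
Hypothesis f_range : forall a, (a < q)%nat -> (f a < r)%nat.

Lemma emb_sum_merge x : Forall (fun a => (a < q)%nat) x -> forall M (psi : list nat -> R),
  sumR (fun y => INR (emb x y) * psi (map f y)) (words q M) =
  sumR (fun c => INR (emb (map f x) c) * psi c) (words r M).
Proof.
  induction x as [|a x IH]; intros Hx M psi.
  - destruct M as [|M].
    + reflexivity.
    + assert (Hz : forall p (g : list nat -> R),
        sumR (fun y => INR (emb [] y) * g y) (words p (S M)) = 0).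
      { intros p g. transitivity (sumR (fun _ => 0) (words p (S M))); [|apply sumR_zero].
        apply sumR_ext_in. intros y Hy. apply In_words in Hy as [Hl _].
        destruct y; [discriminate|]. simpl. lra. }
      cbn [map]. rewrite (Hz r psi). apply (Hz q (fun y => psi (map f y))).
  - inversion Hx as [|? ? Ha Hx']; subst. destruct M as [|M].
    + cbn [words]. rewrite !sumR_cons, !sumR_nil, !emb_nil_r. reflexivity.
    + cbn [map]. rewrite (emb_sum_cons q), (emb_sum_cons r) by auto.
      cbv beta; cbn [map]. rewrite (IH Hx' (S M) psi), (IH Hx' M (fun c => psi (f a :: c))). reflexivity.
Qed.

Lemma W_le_map d x y : 0 <= d <= 1 -> W d x y <= W d (map f x) (map f y).
Proof.
  intro Hd. unfold W. rewrite !length_map.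
  apply Rmult_le_compat_r; [apply pow_le; lra|]. apply Rmult_le_compat_r; [apply pow_le; lra|].
  apply le_INR, emb_le_map.
Qed.

Lemma words_map N x : In x (words q N) -> In (map f x) (words r N).
Proof.
  intro H. apply In_words in H as [Hl HF]. apply In_words. split; [rewrite length_map; auto|].
  apply Forall_map. eapply Forall_impl; [|exact HF]. exact f_range.
Qed.

Lemma channel_merge d N x (Psi : list nat -> R) : In x (words q N) ->
  sumR (fun y => W d x y * Psi (map f y)) (out_words q N) =
  sumR (fun c => W d (map f x) c * Psi c) (out_words r N).
Proof.
  intro Hx. apply In_words in Hx as [Hl HF].
  unfold out_words. rewrite !sumR_flat_map. apply sumR_ext_in. intros M _.
  transitivity ((d ^ (N - M) * (1 - d) ^ M) *
     sumR (fun y => INR (emb x y) * Psi (map f y)) (words q M)).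
  - rewrite <- sumR_scal. apply sumR_ext_in. intros y Hy. apply In_words in Hy as [Hy _].
    unfold W. rewrite Hy, Hl. ring.
  - rewrite emb_sum_merge by assumption. rewrite <- sumR_scal.
    apply sumR_ext_in. intros c Hc. apply In_words in Hc as [Hc _].
    unfold W. rewrite Hc, length_map, Hl. ring.
Qed.

End LetterMerging.

(** Output-length statistics of the deletion channel.  [emb_total q x M] is
    the total number of embeddings of length-[M] words into [x] (that is,
    [C(|x|, M)]), and [len_expect q d x phi] is the expectation of [phi] of
    the output length when [x] is sent. *)
Definition emb_total (q : nat) (x : list nat) (M : nat) : R :=
  sumR (fun y => INR (emb x y)) (words q M).

Definition len_expect (q : nat) (d : R) (x : list nat) (phi : nat -> R) : R :=
  sumR (fun M => emb_total q x M * (d ^ (length x - M) * (1 - d) ^ M) * phi M)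
    (seq 0 (S (length x))).

Lemma emb_total_0 q x : emb_total q x 0 = 1.
Proof. unfold emb_total. cbn [words]. rewrite sumR_cons, sumR_nil, emb_nil_r. simpl; lra. Qed.

Lemma emb_total_long q x M : (length x < M)%nat -> emb_total q x M = 0.
Proof.
  intro H. unfold emb_total. transitivity (sumR (fun _ : list nat => 0) (words q M)); [|apply sumR_zero].
  apply sumR_ext_in. intros y Hy. apply In_words in Hy as [Hy _]. rewrite emb_long by lia. reflexivity.
Qed.

Lemma emb_total_cons q a x m : (a < q)%nat ->
  emb_total q (a :: x) (S m) = emb_total q x (S m) + emb_total q x m.
Proof.
  intro Ha. unfold emb_total. pose proof (emb_sum_cons q a x m (fun _ => 1) Ha) as H.
  rewrite !(sumR_ext_in (fun y => INR (emb _ y) * 1) (fun y => INR (emb _ y))) in H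
    by (intros; ring).
  exact H.
Qed.

Lemma channel_len_sum q d x N (F : nat -> R) :
  sumR (fun y => W d x y * F (length y)) (out_words q N) =
  sumR (fun M => emb_total q x M * (d ^ (length x - M) * (1 - d) ^ M) * F M) (seq 0 (S N)).
Proof.
  unfold out_words. rewrite sumR_flat_map. apply sumR_ext_in. intros M _. unfold emb_total.
  transitivity (sumR (fun y => (d ^ (length x - M) * (1 - d) ^ M * F M) * INR (emb x y)) (words q M)).
  - apply sumR_ext_in. intros y Hy. apply In_words in Hy as [Hl _]. unfold W. rewrite Hl. ring.
  - rewrite sumR_scal. ring.
Qed.

Lemma sum_seq_first (g : nat -> R) n :
  sumR g (seq 0 (S n)) = g 0%nat + sumR (fun m => g (S m)) (seq 0 n).
Proof. rewrite <- cons_seq, <- seq_shift, sumR_cons, sumR_map. reflexivity. Qed.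

Lemma sum_seq_last (g : nat -> R) n : sumR g (seq 0 (S n)) = sumR g (seq 0 n) + g n.
Proof. rewrite seq_S, sumR_app, sumR_cons, sumR_nil. simpl. ring. Qed.

Lemma len_expect_nil q d phi : len_expect q d [] phi = phi 0%nat.
Proof. unfold len_expect. cbn [length seq]. rewrite sumR_cons, sumR_nil, emb_total_0. simpl. ring. Qed.

(** The first input letter is deleted with probability [d] and survives,
    adding one to the output length, with probability [1-d]. *)
Lemma len_expect_cons q d a x phi : (a < q)%nat ->
  len_expect q d (a :: x) phi =
  d * len_expect q d x phi + (1 - d) * len_expect q d x (fun m => phi (S m)).
Proof.
  intro Ha. unfold len_expect. cbn [length]. set (n := length x).
  set (T := fun M => emb_total q x M * (d ^ (n - M) * (1 - d) ^ M)).
  (* Embeddings that keep the first letter: the surviving-length index shifts. *)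
  assert (Hkeep : sumR (fun m => emb_total q x (S m) * (d ^ (n - m) * (1 - d) ^ S m) * phi (S m))
      (seq 0 (S n)) = d * sumR (fun m => T (S m) * phi (S m)) (seq 0 n)).
  { rewrite sum_seq_last, (emb_total_long q x (S n)) by lia. rewrite <- sumR_scal.
    rewrite Rmult_0_l, Rmult_0_l, Rplus_0_r. apply sumR_ext_in. intros m Hm. apply in_seq in Hm.
    unfold T. replace (n - m)%nat with (S (n - S m)) by lia. simpl. ring. }
  rewrite sum_seq_first, emb_total_0.
  rewrite (sumR_ext_in _ (fun m => emb_total q x (S m) * (d ^ (n - m) * (1 - d) ^ S m) * phi (S m)
                                 + (1 - d) * (T m * phi (S m)))).
  2:{ intros m _. unfold T. rewrite emb_total_cons by assumption. simpl. ring. }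
  rewrite sumR_plus, Hkeep, sumR_scal, (sum_seq_first (fun M => T M * phi M)).
  unfold T. rewrite emb_total_0, !Nat.sub_0_r. simpl. ring.
Qed.

Lemma len_expect_ext q d x phi psi :
  (forall m, phi m = psi m) -> len_expect q d x phi = len_expect q d x psi.
Proof. intro H. unfold len_expect. apply sumR_ext_in. intros. rewrite H; reflexivity. Qed.

Lemma len_expect_plus q d x phi psi :
  len_expect q d x (fun m => phi m + psi m) = len_expect q d x phi + len_expect q d x psi.
Proof. unfold len_expect. rewrite <- sumR_plus. apply sumR_ext_in. intros; ring. Qed.

Lemma len_expect_one q d x :
  Forall (fun a => (a < q)%nat) x -> len_expect q d x (fun _ => 1) = 1.
Proof.
  induction x as [|a x IH]; intro Hx; [apply len_expect_nil|]. inversion Hx; subst.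
  rewrite len_expect_cons, IH by assumption. ring.
Qed.

Lemma len_expect_id q d x :
  Forall (fun a => (a < q)%nat) x -> len_expect q d x INR = INR (length x) * (1 - d).
Proof.
  induction x as [|a x IH]; intro Hx; [rewrite len_expect_nil; simpl; ring|]. inversion Hx; subst.
  rewrite len_expect_cons by assumption.
  rewrite (len_expect_ext q d x (fun m => INR (S m)) (fun m => INR m + 1)) by (intro; apply S_INR).
  rewrite len_expect_plus, IH, len_expect_one by assumption. cbn [length]. rewrite S_INR. ring.
Qed.

Lemma channel_total q d x : Forall (fun a => (a < q)%nat) x ->
  sumR (fun y => W d x y) (out_words q (length x)) = 1.
Proof.
  intro Hx. rewrite <- (len_expect_one q d x Hx). unfold len_expect. rewrite <- channel_len_sum.
  apply sumR_ext_in. intros; ring.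
Qed.

Lemma channel_mean_length q d x : Forall (fun a => (a < q)%nat) x ->
  sumR (fun y => W d x y * INR (length y)) (out_words q (length x)) = INR (length x) * (1 - d).
Proof. intro Hx. rewrite <- (len_expect_id q d x Hx). apply channel_len_sum. Qed.

Lemma W_nonneg d x y : 0 <= d <= 1 -> 0 <= W d x y.
Proof.
  intro Hd. unfold W.
  apply Rmult_le_pos; [apply Rmult_le_pos|]; [apply pos_INR| |]; apply pow_le; lra.
Qed.

Section InputDistribution.
Variables (q N : nat) (d : R) (P : list nat -> R).
Hypothesis Hd : 0 <= d <= 1.
Hypothesis HP : is_dist q N P.

Lemma input_nonneg x : In x (words q N) -> 0 <= P x.
Proof. apply (proj1 HP). Qed.

Lemma input_sum : sumR P (words q N) = 1.
Proof. exact (proj2 HP). Qed.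

Lemma joint_nonneg x y : In x (words q N) -> 0 <= P x * W d x y.
Proof. intro Hx. apply Rmult_le_pos; [apply input_nonneg; auto|apply W_nonneg; auto]. Qed.

Lemma joint_zero x y : In x (words q N) -> ~ 0 < P x * W d x y -> P x * W d x y = 0.
Proof. intros Hx Hn. pose proof (joint_nonneg x y Hx). lra. Qed.

Lemma joint_le_output x y : In x (words q N) -> P x * W d x y <= PY q N d P y.
Proof.
  intro Hx. apply (sumR_term (fun x => P x * W d x y)); [|exact Hx].
  intros b Hb. apply joint_nonneg. exact Hb.
Qed.

Lemma output_nonneg y : 0 <= PY q N d P y.
Proof. apply sumR_nonneg. intros x Hx. apply joint_nonneg. exact Hx. Qed.

Lemma output_sum : sumR (PY q N d P) (out_words q N) = 1.
Proof.
  unfold PY. change sum_list with (@sumR (list nat)). rewrite sumR_swap, <- input_sum.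
  apply sumR_ext_in. intros x Hx. rewrite sumR_scal.
  apply In_words in Hx as [Hl HF]. rewrite <- Hl, channel_total by assumption. ring.
Qed.

End InputDistribution.

Definition pushforward (q N : nat) (f : nat -> nat) (P : list nat -> R) (b : list nat) : R :=
  sumR (fun x => if word_eq_dec (map f x) b then P x else 0) (words q N).

Section Pushforward.
Variables (q r N : nat) (f : nat -> nat) (P : list nat -> R).
Hypothesis f_range : forall a, (a < q)%nat -> (f a < r)%nat.
Hypothesis HP : is_dist q N P.

Let Pf := pushforward q N f P.

Lemma pushforward_nonneg b : 0 <= Pf b.
Proof.
  apply sumR_nonneg. intros x Hx.
  destruct (word_eq_dec _ b); [apply (input_nonneg q N P HP); auto|lra].
Qed.

Lemma pushforward_ge x : In x (words q N) -> P x <= Pf (map f x).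
Proof.
  intro Hx. unfold Pf, pushforward.
  eapply Rle_trans; [|apply (sumR_term _ _ x); auto].
  - cbv beta. destruct (word_eq_dec (map f x) (map f x)); [lra|congruence].
  - intros a Ha. destruct (word_eq_dec _ _); [apply (input_nonneg q N P HP); auto|lra].
Qed.

Lemma pushforward_regroup (G : list nat -> R) :
  sumR (fun x => P x * G (map f x)) (words q N) = sumR (fun b => Pf b * G b) (words r N).
Proof.
  unfold Pf, pushforward.
  transitivity (sumR (fun b => sumR (fun x =>
     if word_eq_dec (map f x) b then P x * G b else 0) (words q N)) (words r N)).
  - rewrite <- sumR_swap. apply sumR_ext_in. intros x Hx.
    rewrite (sum_words_delta r N (fun b => P x * G b) (map f x)); [reflexivity|].
    apply (words_map q r f f_range); auto.
  - apply sumR_ext_in. intros b _. rewrite Rmult_comm, <- sumR_scal. apply sumR_ext_in.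
    intros x _. destruct (word_eq_dec _ _); ring.
Qed.

Lemma pushforward_dist : is_dist r N Pf.
Proof.
  split; [intros; apply pushforward_nonneg|].
  change sum_list with (@sumR (list nat)). rewrite <- (input_sum q N P HP).
  pose proof (pushforward_regroup (fun _ => 1)) as H.
  rewrite !(sumR_ext_in (fun a => _ * 1) _ _ (fun a _ => Rmult_1_r _)) in H.
  symmetry. exact H.
Qed.

End Pushforward.

Definition binary_class (K a : nat) : nat := if Nat.ltb a K then 0%nat else 1%nat.

Lemma binary_class_range K a : (binary_class K a < 2)%nat.
Proof. unfold binary_class; destruct (Nat.ltb a K); lia. Qed.

Lemma sum_letters_binary_class K (g : nat -> R) :
  sumR (fun a => g (binary_class K a)) (seq 0 (2 * K)) = INR K * (g 0%nat + g 1%nat).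
Proof.
  replace (2 * K)%nat with (K + K)%nat by lia. rewrite seq_app, sumR_app.
  rewrite (sumR_ext_in _ (fun _ => g 0%nat) (seq 0 K)),
          (sumR_ext_in _ (fun _ => g 1%nat) (seq (0 + K) K)).
  - rewrite !sumR_const, !length_seq. lra.
  - intros a Ha. apply in_seq in Ha. unfold binary_class. destruct (Nat.ltb_spec a K); [lia|reflexivity].
  - intros a Ha. apply in_seq in Ha. unfold binary_class. destruct (Nat.ltb_spec a K); [reflexivity|lia].
Qed.

Lemma sum_words_binary_class K M (psi : list nat -> R) :
  sumR (fun y => psi (map (binary_class K) y)) (words (2 * K) M) = INR K ^ M * sumR psi (words 2 M).
Proof.
  revert psi; induction M as [|M IH]; intro psi.
  - cbn [words]. rewrite !sumR_cons, !sumR_nil. simpl. lra.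
  - rewrite !sum_words_S.
    rewrite (sumR_ext_in _ (fun w => INR K * (psi (0%nat :: map (binary_class K) w)
                                             + psi (1%nat :: map (binary_class K) w)))).
    + rewrite sumR_scal, sumR_plus, (IH (fun c => psi (0%nat :: c))), (IH (fun c => psi (1%nat :: c))).
      rewrite (sumR_ext_in (fun w => sumR (fun a => psi (a :: w)) (seq 0 2))
                           (fun w => psi (0%nat :: w) + psi (1%nat :: w))).
      * rewrite sumR_plus. simpl. ring.
      * intros w _. cbn [seq]. rewrite !sumR_cons, sumR_nil. ring.
    + intros w _. apply (sum_letters_binary_class K (fun b => psi (b :: map (binary_class K) w))).
Qed.

Lemma ln_le_sub1 x : 0 < x -> ln x <= x - 1.
Proof. intro H. pose proof (exp_ineq1_le (ln x)). rewrite exp_ln in H0; lra. Qed.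

Lemma ln_le x y : 0 < x -> x <= y -> ln x <= ln y.
Proof. intros Hx [Hxy|<-]; [left; apply ln_increasing|right]; auto. Qed.

(** Pointwise form of the argument: the information density [ln (w / py)] is
    bounded by a larger density [ln (w' / py2)], the cost [ln k] of the
    reference measure [py2 / k], and the Gibbs term [(py2 / k) / py - 1]. *)
Lemma density_split p w w' py py2 k : 0 < p -> 0 < w -> w <= w' -> 0 < py -> 0 < py2 -> 0 < k ->
  p * ln (w / py) <= p * ln (w' / py2) + p * ln k + p * ((py2 / k) / py - 1).
Proof.
  intros Hp Hw Hww Hpy Hpy2 Hk.
  assert (Hq : 0 < py2 / k / py) by (apply Rdiv_lt_0_compat; [apply Rdiv_lt_0_compat|]; lra).
  pose proof (ln_le_sub1 _ Hq) as Hgibbs. pose proof (ln_le w w' Hw Hww) as Hmono.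
  unfold Rdiv in *. rewrite !ln_mult, !ln_Rinv in * by
    (try apply Rinv_0_lt_compat; try apply Rmult_lt_0_compat; try apply Rinv_0_lt_compat; lra).
  rewrite <- !Rmult_plus_distr_l. apply Rmult_le_compat_l; lra.
Qed.

Section BlockBound.
Variables (K : nat) (d : R) (N : nat) (P : list nat -> R).
Hypothesis HK : (1 <= K)%nat.
Hypothesis Hd : 0 <= d <= 1.
Hypothesis HP : is_dist (2 * K) N P.

Let f := binary_class K.
Let PY2K := PY (2 * K) N d P.

Definition P2 : list nat -> R := pushforward (2 * K) N f P.
Let PY2 := PY 2 N d P2.

Lemma f_range a : (a < 2 * K)%nat -> (f a < 2)%nat.
Proof. intros _. apply binary_class_range. Qed.

Lemma P2_dist : is_dist 2 N P2.
Proof. apply (pushforward_dist (2 * K) 2 N f P f_range HP). Qed.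

Lemma INR_K_pos : 0 < INR K.
Proof. apply lt_0_INR. lia. Qed.

(** Reference output measure: the binary output distribution, spread
    uniformly over the [K^|y|] words with the same binary image. *)
Definition Q (y : list nat) : R := PY2 (map f y) / INR K ^ length y.

Lemma Q_nonneg y : 0 <= Q y.
Proof.
  apply Rmult_le_pos; [apply (output_nonneg 2 N d P2 Hd P2_dist)|].
  left. apply Rinv_0_lt_compat, pow_lt, INR_K_pos.
Qed.

Lemma Q_sum : sumR Q (out_words (2 * K) N) = 1.
Proof.
  unfold out_words. rewrite sumR_flat_map.
  rewrite <- (output_sum 2 N d P2 P2_dist). unfold out_words. rewrite sumR_flat_map.
  apply sumR_ext_in. intros M _.
  transitivity (/ INR K ^ M * sumR (fun y => PY2 (map f y)) (words (2 * K) M)).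
  - rewrite <- sumR_scal. apply sumR_ext_in. intros y Hy. apply In_words in Hy as [Hy _].
    unfold Q. rewrite Hy. unfold Rdiv. ring.
  - unfold f. rewrite sum_words_binary_class. fold PY2. field. apply pow_nonzero. pose proof INR_K_pos; lra.
Qed.

Definition density2 (b c : list nat) : R :=
  if Rlt_dec 0 (P2 b * W d b c) then ln (W d b c / PY2 c) else 0.

(** Gibbs remainder, whose total is nonpositive. *)
Definition gibbs_term (x y : list nat) : R :=
  if Rlt_dec 0 (P x * W d x y) then P x * W d x y * (Q y / PY2K y - 1) else 0.

(** Each term of [I(X;Y)] splits, by [density_split] with [w' = W(f y|f x)],
    [py2 = P_{Y2}(f y)] and [k = K^|y|], into a binary density term, a
    length term and a Gibbs remainder. *)
Lemma density_bound x y : In x (words (2 * K) N) ->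
  (if Rlt_dec 0 (P x * W d x y) then P x * W d x y * ln (W d x y / PY2K y) else 0)
  <= P x * W d x y * density2 (map f x) (map f y)
     + P x * W d x y * INR (length y) * ln (INR K) + gibbs_term x y.
Proof.
  intro Hx. unfold gibbs_term. destruct (Rlt_dec 0 (P x * W d x y)) as [Hpw|Hpw].
  2:{ rewrite (joint_zero (2 * K) N d P Hd HP x y Hx Hpw). lra. }
  pose proof (input_nonneg _ _ P HP x Hx) as HPx. pose proof (W_nonneg d x y Hd) as HW.
  assert (Hp : 0 < P x) by (destruct HPx as [|Hz]; [auto|rewrite <- Hz, Rmult_0_l in Hpw; lra]).
  assert (Hw : 0 < W d x y) by (destruct HW as [|Hz]; [auto|rewrite <- Hz, Rmult_0_r in Hpw; lra]).
  pose proof (W_le_map f d x y Hd) as Hww.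
  pose proof (pushforward_ge (2 * K) N f P HP x Hx) as HP2. change (P x <= P2 (map f x)) in HP2.
  assert (H2 : 0 < P2 (map f x) * W d (map f x) (map f y)) by (apply Rmult_lt_0_compat; lra).
  pose proof (joint_le_output 2 N d P2 Hd P2_dist (map f x) (map f y)
                (words_map _ _ f f_range N x Hx)) as Hq. fold PY2 in Hq.
  pose proof (joint_le_output _ N d P Hd HP x y Hx) as Hpy. fold PY2K in Hpy.
  unfold density2. destruct (Rlt_dec 0 _) as [_|Hn]; [|lra].
  replace (P x * W d x y * INR (length y) * ln (INR K))
    with (P x * W d x y * ln (INR K ^ length y)) by (rewrite ln_pow by apply INR_K_pos; ring).
  apply density_split; try lra. apply pow_lt, INR_K_pos.
Qed.

(** The binary density terms add up to the binary mutual information, by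
    [channel_merge] on the outputs and [pushforward_regroup] on the inputs. *)
Lemma density2_total :
  sumR (fun x => sumR (fun y => P x * W d x y * density2 (map f x) (map f y))
    (out_words (2 * K) N)) (words (2 * K) N) = MI 2 N d P2.
Proof.
  set (G b := sumR (fun c => W d b c * density2 b c) (out_words 2 N)).
  transitivity (sumR (fun x => P x * G (map f x)) (words (2 * K) N)).
  - apply sumR_ext_in. intros x Hx. unfold G.
    rewrite <- (channel_merge (2 * K) 2 f f_range d N x (density2 (map f x))) by assumption.
    rewrite <- sumR_scal. apply sumR_ext_in. intros; ring.
  - rewrite (pushforward_regroup (2 * K) 2 N f P f_range). fold P2. unfold MI.
    change sum_list with (@sumR (list nat)). apply sumR_ext_in. intros b _.
    unfold G. rewrite <- sumR_scal. apply sumR_ext_in. intros c _.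
    unfold density2. destruct (Rlt_dec _ _); [fold PY2; ring|ring].
Qed.

Lemma length_total :
  sumR (fun x => sumR (fun y => P x * W d x y * INR (length y) * ln (INR K))
    (out_words (2 * K) N)) (words (2 * K) N) = INR N * (1 - d) * ln (INR K).
Proof.
  transitivity (sumR (fun x => INR N * (1 - d) * ln (INR K) * P x) (words (2 * K) N)).
  2:{ rewrite sumR_scal, (input_sum _ _ P HP). ring. }
  apply sumR_ext_in. intros x Hx. apply In_words in Hx as [Hl HF].
  transitivity (P x * ln (INR K) * sumR (fun y => W d x y * INR (length y)) (out_words (2 * K) (length x))).
  - rewrite <- sumR_scal, Hl. apply sumR_ext_in; intros; ring.
  - rewrite channel_mean_length, Hl by assumption. ring.
Qed.

(** Gibbs' inequality: both [PY2K] and [Q] are probability distributions. *)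
Lemma gibbs_total :
  sumR (fun x => sumR (gibbs_term x) (out_words (2 * K) N)) (words (2 * K) N) <= 0.
Proof.
  rewrite sumR_swap.
  apply Rle_trans with (sumR (fun y => Q y + -1 * PY2K y) (out_words (2 * K) N)).
  - apply sumR_le_in. intros y _.
    assert (Hcol : sumR (fun x => gibbs_term x y) (words (2 * K) N) = PY2K y * (Q y / PY2K y - 1)).
    { transitivity (sumR (fun x => P x * W d x y) (words (2 * K) N) * (Q y / PY2K y - 1));
        [|reflexivity].
      rewrite Rmult_comm, <- sumR_scal. apply sumR_ext_in. intros x Hx. unfold gibbs_term.
      destruct (Rlt_dec _ _) as [|Hn]; [ring|].
      rewrite (joint_zero (2 * K) N d P Hd HP x y Hx Hn). ring. }
    rewrite Hcol. pose proof (Q_nonneg y). pose proof (output_nonneg _ N d P Hd HP y) as Hy.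
    fold PY2K in Hy. destruct Hy as [Hy|<-]; [right; field; lra|lra].
  - rewrite sumR_plus, sumR_scal, Q_sum. unfold PY2K. rewrite (output_sum _ N d P HP). lra.
Qed.

Lemma block_bound : MI (2 * K) N d P <= MI 2 N d P2 + INR N * (1 - d) * ln (INR K).
Proof.
  rewrite <- density2_total, <- length_total. pose proof gibbs_total.
  apply Rle_trans with (sumR (fun x => sumR (fun y =>
     P x * W d x y * density2 (map f x) (map f y)
     + P x * W d x y * INR (length y) * ln (INR K) + gibbs_term x y) (out_words (2 * K) N)) (words (2 * K) N)).
  - apply sumR_le_in. intros x Hx. apply sumR_le_in. intros y _. apply density_bound; auto.
  - rewrite (sumR_ext_in _ (fun x =>
        sumR (fun y => P x * W d x y * density2 (map f x) (map f y)) (out_words (2 * K) N)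
      + sumR (fun y => P x * W d x y * INR (length y) * ln (INR K)) (out_words (2 * K) N)
      + sumR (gibbs_term x) (out_words (2 * K) N)))
      by (intros; rewrite !sumR_plus; reflexivity).
    rewrite !sumR_plus. lra.
Qed.

End BlockBound.

Lemma cv_const c : Un_cv (fun _ => c) c.
Proof. intros eps He. exists 0%nat. intros. unfold Rdist. rewrite Rminus_diag, Rabs_R0. lra. Qed.

Theorem theorem1 (K : nat) (d C2K C2 : R) :
  (1 <= K)%nat -> 0 <= d <= 1 ->
  is_capacity (2 * K) d C2K -> is_capacity 2 d C2 ->
  C2K <= C2 + (1 - d) * ln (INR K).
Proof.
  intros HK Hd [M1 [HM1 Hc1]] [M2 [HM2 Hc2]].
  assert (Hb : forall N, M1 N <= M2 N + INR N * (1 - d) * ln (INR K)).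
  { intro N. apply (proj2 (HM1 N)). intros r [P [HP ->]].
    eapply Rle_trans; [apply (block_bound K d N P HK Hd HP)|].
    apply Rplus_le_compat_r, (proj1 (HM2 N)). exists (P2 K N P). split; [apply P2_dist|]; auto. }
  apply (Rle_cv_lim (Un := fun n => M1 (S n) / INR (S n))
                    (Vn := fun n => M2 (S n) / INR (S n) + (1 - d) * ln (INR K))); [|exact Hc1|].
  - intro n. pose proof (Hb (S n)). pose proof (lt_0_INR (S n) ltac:(lia)).
    apply Rmult_le_reg_r with (INR (S n)); auto.
    unfold Rdiv. rewrite Rmult_plus_distr_r, !Rmult_assoc, Rinv_l by lra. lra.
  - apply CV_plus; [exact Hc2|apply cv_const].
Qed.
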